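(* Let $S$ be a non-empty poset and $(\mathcal{L},\rightharpoonup)=(L,\wedge,\vee,0,1)$ a complete lattice with an $S$-action. (1) $Spec^c(\mathcal{L})=Spec^s(\mathcal{L}^0)$. (2) $Spec^c(\mathcal{L}^0)=Spec^s(\mathcal{L}^* )$. (3) If $x\in L\setminus\{1\}$ is prime, then $Spec^f(\mathcal{L}/x)=(L/x)\setminus\{x/x\}$. (4) Assume additionally that $s\rightharpoonup(y\vee z)=(s\rightharpoonup y)\vee(s\rightharpoonup z)$ for all $s\in S$, $y,z\in L$. Then $x\in L\setminus\{1\}$ is prime if and only if $Spec^f(\mathcal{L}/x)=(L/x)\setminus\{x/x\}$.
   Context: An $S$-action on a lattice $(L,\wedge,\vee)$ is a map $\rightharpoonup:S\times L\to L$ such that $s_1\leq s_2\Rightarrow s_1\rightharpoonup x\leq s_2\rightharpoonup x$; $x\leq y\Rightarrow s\rightharpoonup x\leq s\rightharpoonup y$; and $s\rightharpoonup x\leq x$. For a bounded lattice $\mathcal{L}$ with $S$-action, the dual lattice $\mathcal{L}^0=(L,\vee,\wedge,1,0)$ (order reversed, bottom $1$, top $0$) carries the action of the dual poset $S^0=(S,\geq)$ given by $s\rightharpoonup^0 x=(s\rightharpoonup 1)\vee x$; $\mathcal{L}^*$ denotes $\mathcal{L}$ with the $S$-action $s\rightharpoonup^* x=(s\rightharpoonup 1)\wedge x$. For a bounded lattice with action (bottom $0$, top $1$): an element $x\neq 1$ is prime iff for all $y\in L$, $s\in S$: $s\rightharpoonup y\leq x$ implies $s\rightharpoonup 1\leq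 x$ or $y\leq x$; $x\neq 1$ is coprime iff for all $s\in S$: $s\rightharpoonup 1\leq x$ or $(s\rightharpoonup 1)\vee x=1$; $x\neq 0$ is second iff for all $s$: $s\rightharpoonup x=x$ or $s\rightharpoonup x=0$; $x\neq 0$ is first iff for all $y\in L$, $s\in S$: if $s\rightharpoonup y=0$ and $y\leq x$ then $s\rightharpoonup x=0$ or $y=0$. $Spec^c$, $Spec^s$, $Spec^f$ denote the sets of coprime, second, first elements respectively (computed with respect to the lattice's own order, bounds and action). Quotient lattice: for $x\in L$ and $y,z\geq x$, set $y\sim z$ iff for every $y'\leq y$ there is $z'\leq z$ with $y'\vee x=z'\vee x$ and for every $z'\leq z$ there is $y'\leq y$ with $y'\vee x=z'\vee x$; $y/x$ is the class of $y$, $L/x=\{y/x: y\geq x\}$, ordered by $y/x\leq^q z/x$ iff for every $y'\leq y$ there is $z'\leq z$ with $y'\vee x=z'\vee x$, with $y/x\wedge^q z/x=(y\wedge z)/x$, $y/x\vee^q z/x=(y\vee z)/x$; its bottom is $x/x$ and top $1/x$. $\mathcal{L}/x$ carries the $S$-action $s\rightharpoonup^q y/x=((s\rightharpoonup y)\vee x)/x$. *)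

From HB Require Import structures.
From mathcomp Require Import all_boot all_order.
Set Implicit Arguments. Unset Strict Implicit. Unset Printing Implicit Defensive.
Import Order.TTheory.
Local Open Scope order_scope.

Section LatticeAction.
Context {dS : Order.disp_t} {S : porderType dS}
        {d : Order.disp_t} {L : tbLatticeType d}.
Variable act : S -> L -> L.

Definition is_action : Prop :=
  [/\ (forall s1 s2 x, s1 <= s2 -> act s1 x <= act s2 x),
      (forall s x y, x <= y -> act s x <= act s y) &
      (forall s x, act s x <= x)].

Definition complete_lattice : Prop :=
  forall A : L -> Prop, exists u : L,
    (forall a, A a -> a <= u) /\ (forall b, (forall a, A a -> a <= b) -> u <= b).

Definition Lprime (x : L) : Prop :=
  x != \top /\ forall (y : L) (s : S), act s y <= x -> act s \top <= x \/ y <= x.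

Definition Lcoprime (x : L) : Prop :=
  x != \top /\ forall s : S, act s \top <= x \/ act s \top `|` x = \top.

Definition Lsecond (x : L) : Prop :=
  x != \bot /\ forall s : S, act s x = x \/ act s x = \bot.

Definition Lfirst (x : L) : Prop :=
  x != \bot /\ forall (y : L) (s : S), act s y = \bot -> y <= x ->
                                       act s x = \bot \/ y = \bot.

(* The dual action on L^0 = L^d (order reversed) of the dual poset S^0 = S^d:
   s ⇀^0 x = (s ⇀ 1) ∨ x, with ∨ the join of the ORIGINAL lattice L. *)
Definition dual_act (s : S^d) (x : L^d) : L^d :=
  @Order.join d L (act s (\top : L)) (x : L).

Definition star_act (s : S) (x : L) : L := act s \top `&` x.

(* ---------- the quotient lattice L/x, described on representatives y >= x ---------- *)
(* y/x <=^q z/x *)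
Definition qle (x y z : L) : Prop :=
  forall y', y' <= y -> exists2 z', z' <= z & y' `|` x = z' `|` x.
(* y ~ z, i.e. y/x = z/x *)
Definition qeq (x y z : L) : Prop := qle x y z /\ qle x z y.
(* representative of s ⇀^q y/x *)
Definition qact (x : L) (s : S) (y : L) : L := act s y `|` x.

(* y/x is a first element of L/x (bottom of L/x is x/x; elements of L/x are
   the classes z/x with z >= x) *)
Definition qfirst (x y : L) : Prop :=
  ~ qeq x y x /\
  forall (z : L) (s : S), x <= z ->
    qeq x (qact x s z) x -> qle x z y ->
    qeq x (qact x s y) x \/ qeq x z x.

(* Spec^f(L/x) = (L/x) \ {x/x} *)
Definition specf_quot_full (x : L) : Prop :=
  forall y : L, x <= y -> (qfirst x y <-> ~ qeq x y x).

End LatticeAction.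

From HB Require Import structures.
From mathcomp Require Import all_boot all_order.
Import Order.TTheory.
Local Open Scope order_scope.

(* A class y/x is the bottom x/x of L/x exactly when y <= x, so every condition
   on L/x turns into an inequality in L.  Then (1) and (2) are the equivalences
   (s ⇀ 1) ∨ x = x <-> s ⇀ 1 <= x and (s ⇀ 1) ∧ x = x <-> x <= s ⇀ 1; a prime x
   makes every nonzero class first; conversely, firstness of 1/x applied to the
   class of y ∨ x gives primeness when the action distributes over joins. *)

Section QuotientBottom.
Context {d : Order.disp_t} {L : tbLatticeType d}.

Lemma qeq_baseP (x y : L) : qeq x y x <-> y <= x.
Proof.
split=> [[yx _] | le_yx].
  by have [z le_zx e] := yx y (lexx y); rewrite leEjoin e -leEjoin.
split=> [y' le_y'y | y' le_y'x]; first by exists y'; [exact: le_trans le_yx|].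
by exists \bot; rewrite ?le0x // join0x (join_idPr le_y'x).
Qed.

Lemma qle_top (x y : L) : qle x y \top.
Proof. by move=> y' _; exists y'; rewrite ?lex1. Qed.

End QuotientBottom.

Section DualSpectra.
Context {dS : Order.disp_t} {S : porderType dS} {d : Order.disp_t} {L : tbLatticeType d}.
Variable act : S -> L -> L.

Lemma Lcoprime_Lsecond_dual (x : L) :
  Lcoprime act x <-> Lsecond (dual_act act) (x : L^d).
Proof.
split=> -[x_ntop coprime_x]; split=> // s.
  by case: (coprime_x s) => [/join_idPr|]; [left|right].
by case: (coprime_x s) => [eq_x|]; [left; apply/join_idPr|right].
Qed.

Lemma dual_act_top (s : S) : dual_act act s (\top : L^d) = act s \top :> L.
Proof. exact: joinx0. Qed.

Lemma Lcoprime_dual_Lsecond_star (x : L) :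
  Lcoprime (dual_act act) (x : L^d) <-> Lsecond (star_act act) x.
Proof.
split=> -[x_nbot coprime_x]; split=> // s.
  by move: (coprime_x s); rewrite dual_act_top => -[le_x|]; [left; apply/meet_idPr|right].
by case: (coprime_x s) => [/meet_idPr|]; [left|right]; rewrite dual_act_top.
Qed.

End DualSpectra.

Section PrimeQuotient.
Context {dS : Order.disp_t} {S : porderType dS} {d : Order.disp_t} {L : tbLatticeType d}.
Variable act : S -> L -> L.
Hypothesis act_homo : forall s, {homo act s : y z / y <= z}.

Lemma Lprime_specf_quot_full (x : L) : Lprime act x -> specf_quot_full act x.
Proof.
move=> [_ prime_x] y _; split=> [[] //| y_nbot]; split=> // z s _.
move=> /qeq_baseP /(le_trans (leUl _ _)) /prime_x [top_x _ | zx]; last first.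
  by right; apply/qeq_baseP.
by left; apply/qeq_baseP; rewrite /qact leUx lexx andbT (le_trans _ top_x) ?act_homo ?lex1.
Qed.

Hypothesis act_le : forall s y, act s y <= y.
Hypothesis act_joinD : forall s, {morph act s : y z / y `|` z}.

Lemma specf_quot_full_Lprime (x : L) :
  x != \top -> specf_quot_full act x -> Lprime act x.
Proof.
move=> x_ntop specf_x; split=> // y s le_syx.
have [_ first_top] : qfirst act x \top.
  by apply/(specf_x _ (lex1 x)) => /qeq_baseP; rewrite le1x (negPf x_ntop).
have syx_bot : qeq x (qact act x s (y `|` x)) x.
  by apply/qeq_baseP; rewrite /qact act_joinD !leUx le_syx act_le lexx.
have [|] := first_top _ s (leUr x y) syx_bot (qle_top _ _) => /qeq_baseP le_x.
  by left; exact: le_trans (leUl _ _) le_x.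
by right; exact: le_trans (leUl _ _) le_x.
Qed.

End PrimeQuotient.

Theorem mainTheorem7 (dS : Order.disp_t) (S : porderType dS)
  (d : Order.disp_t) (L : tbLatticeType d) (act : S -> L -> L) :
  inhabited S -> @complete_lattice d L -> is_action act ->
  [/\ (* (1) *) (forall x : L, Lcoprime act x <-> Lsecond (dual_act act) (x : L^d)),
      (* (2) *) (forall x : L, Lcoprime (dual_act act) (x : L^d) <-> Lsecond (star_act act) x),
      (* (3) *) (forall x : L, x != \top -> Lprime act x -> specf_quot_full act x) &
      (* (4) *) ((forall (s : S) (y z : L), act s (y `|` z) = act s y `|` act s z) ->
                 forall x : L, x != \top -> (Lprime act x <-> specf_quot_full act x))].
Proof.
move=> _ _ [_ act_homo act_le]; split=> [x|x|x _|act_joinD x x_ntop].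
- exact: Lcoprime_Lsecond_dual.
- exact: Lcoprime_dual_Lsecond_star.
- exact: Lprime_specf_quot_full.
split; first exact: Lprime_specf_quot_full.
exact: specf_quot_full_Lprime.
Qed.
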